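(* For any system $\mathcal{G}$, if $\mathcal{G}\models\mathit{NDS}$ then $\mathcal{G}\models\mathit{GNI}$, where $\mathit{NDS}:=\neg\Big(\exists\pi_1.\langle\langle\{\xi_H\}\rangle\rangle\pi_2.\ \square\big(\bigwedge_{a\in L}a_{\pi_1}\leftrightarrow a_{\pi_2}\big)\rightarrow\lozenge\big(\bigvee_{a\in O}a_{\pi_1}\not\leftrightarrow a_{\pi_2}\big)\Big)$ and $\mathit{GNI}:=\forall\pi_1.\forall\pi_2.\exists\pi_3.\ \square\big(\bigwedge_{a\in H}a_{\pi_1}\leftrightarrow a_{\pi_3}\big)\wedge\square\big(\bigwedge_{a\in O}a_{\pi_2}\leftrightarrow a_{\pi_3}\big)$.
   Context: A multi-stage concurrent game structure (MSCGS) is $\mathcal{G}=(S,s_0,\Xi,\mathscr{M},\delta,d,\mathbf{AP},\ell)$: finite states $S$, initial state $s_0$, finite agents $\Xi$, finite moves $\mathscr{M}$, transition function $\delta:S\times(\Xi\to\mathscr{M})\to S$, stage function $d:\Xi\to\mathbb{N}$, atomic propositions $\mathbf{AP}$, labelling $\ell:S\to2^{\mathbf{AP}}$. A system here is an MSCGS with agents $\xi_N$ (non-determinism), $\xi_H$ (high-security inputs) and $\xi_L$ (low-security inputs), where $\mathbf{AP}$ contains pairwise disjoint sets $H$ (high inputs), $L$ (low inputs), $O$ (outputs), and the move of $\xi_H$ (resp. $\xi_L$) determines the values of the propositions in $H$ (resp. $L$) in the next state. In $\mathit{NDS}$ the implication is inside the scope of both quantifiers. Semantics of $\texttt{HyperATL}^*$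 used here: a strategy for agent $\xi$ is $f_\xi:S^+\times(\{\xi'\mid d(\xi')<d(\xi)\}\to\mathscr{M})\to\mathscr{M}$; for $A\subseteq\Xi$, strategies $F_A$ and state $s$, $\mathit{out}(\mathcal{G},s,F_A)$ is the set of $u\in S^\omega$ with $u(0)=s$ such that for all $i$ there is a global move vector $\sigma$ with $\delta(u(i),\sigma)=u(i+1)$ and $\sigma(\xi)=f_\xi(u[0,i],\sigma_{\mid\{\xi'\mid d(\xi')<d(\xi)\}})$ for all $\xi\in A$. For a path assignment $\Pi$, $\Pi\models\langle\langle A\rangle\rangle\pi.\varphi$ iff there exist $F_A$ such that for all $t\in\mathit{out}(\mathcal{G},\Pi(\epsilon)(0),F_A)$, $\Pi[\pi\mapsto t]\models\varphi$, where $\Pi(\epsilon)$ is the most recently added path ($\Pi(\epsilon)(0)=s_0$ if $\Pi$ is empty); $\forall\pi=\langle\langle\emptyset\rangle\rangle\pi$, $\exists\pi=\langle\langle\Xi\rangle\rangle\pi$; $a_\pi$ holds iff $a\in\ell$ of the current state of the path bound to $\pi$; temporal operators are interpreted synchronously; $\neg$ is negation. $\mathcal{G}\models\varphi$ iff the empty assignment satisfies $\varphi$. *)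

From mathcomp Require Import all_boot.
Set Implicit Arguments. Unset Strict Implicit. Unset Printing Implicit Defensive.

Record MSCGS := {
  st : finType;
  s0 : st;
  agent : finType;
  move : finType;
  delta : st -> (agent -> move) -> st;
  stage : agent -> nat;
  AP : finType;
  lab : st -> {set AP}
}.

Section Semantics.
Variable G : MSCGS.

Definition path := nat -> st G.

Definition prefix (u : path) (i : nat) : seq (st G) := [seq u j | j <- iota 0 i.+1].

(* A strategy for each agent: f_xi : S^+ x ({xi' | d xi' < d xi} -> M) -> M,
   represented as a function on full move vectors that only depends on the
   moves of agents of strictly smaller stage. *)
Definition strategies := agent G -> seq (st G) -> (agent G -> move G) -> move G.

Definition stage_respecting (A : {set agent G}) (F : strategies) : Prop :=
  forall xi, xi \in A -> forall p (s1 s2 : agent G -> move G),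
    (forall xi', stage xi' < stage xi -> s1 xi' = s2 xi') ->
    F xi p s1 = F xi p s2.

Definition out (s : st G) (A : {set agent G}) (F : strategies) (u : path) : Prop :=
  u 0 = s /\
  forall i, exists sigma : agent G -> move G,
    delta (u i) sigma = u i.+1 /\
    forall xi, xi \in A -> sigma xi = F xi (prefix u i) sigma.

Inductive hform :=
| HTrue
| HAtom of AP G & nat
| HNeg of hform
| HAnd of hform & hform
| HNext of hform
| HUntil of hform & hform
| HQuant of {set agent G} & nat & hform.

Definition HOr f g := HNeg (HAnd (HNeg f) (HNeg g)).
Definition HImp f g := HOr (HNeg f) g.
Definition HIff f g := HAnd (HImp f g) (HImp g f).
Definition HEv f := HUntil HTrue f.
Definition HGlob f := HNeg (HEv (HNeg f)).
Definition HForall pi f := HQuant set0 pi f.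
Definition HExists pi f := HQuant setT pi f.
Definition HBigAnd (s : seq hform) := foldr HAnd HTrue s.
Definition HBigOr (s : seq hform) := foldr HOr (HNeg HTrue) s.

(* path assignments: most recently added path first *)
Definition assignment := seq (nat * path).

Definition shift (k : nat) (P : assignment) : assignment :=
  [seq (x.1, fun j => x.2 (k + j)) | x <- P].

Fixpoint lookup (pi : nat) (P : assignment) : option path :=
  match P with
  | [::] => None
  | x :: P' => if x.1 == pi then Some x.2 else lookup pi P'
  end.

Definition cur_state (P : assignment) : st G :=
  match P with [::] => s0 G | x :: _ => x.2 0 end.

Fixpoint sat (P : assignment) (f : hform) : Prop :=
  match f with
  | HTrue => True
  | HAtom a pi => match lookup pi P with Some t => a \in lab (t 0) | None => False end
  | HNeg g => ~ sat P g
  | HAnd g h => sat P g /\ sat P h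
  | HNext g => sat (shift 1 P) g
  | HUntil g h => exists k, sat (shift k P) h /\ forall j, j < k -> sat (shift j P) g
  | HQuant A pi g =>
      exists F : strategies, stage_respecting A F /\
        forall t, out (cur_state P) A F t -> sat ((pi, t) :: P) g
  end.

Definition models (f : hform) : Prop := sat [::] f.

Definition is_system (xiN xiH xiL : agent G) (H L O : {set AP G}) : Prop :=
  [/\ [/\ xiN != xiH, xiN != xiL & xiH != xiL],
      (forall xi, xi = xiN \/ xi = xiH \/ xi = xiL),
      [/\ [disjoint H & L], [disjoint H & O] & [disjoint L & O]],
      (forall s s' (sg sg' : agent G -> move G), sg xiH = sg' xiH ->
          lab (delta s sg) :&: H = lab (delta s' sg') :&: H) &
      (forall s s' (sg sg' : agent G -> move G), sg xiL = sg' xiL ->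
          lab (delta s sg) :&: L = lab (delta s' sg') :&: L)].

Definition eq_on (X : {set AP G}) (p q : nat) : hform :=
  HBigAnd [seq HIff (HAtom a p) (HAtom a q) | a <- enum X].

Definition NDS (xiH : agent G) (L O : {set AP G}) : hform :=
  HNeg (HExists 1 (HQuant [set xiH] 2
     (HImp (HGlob (eq_on L 1 2))
           (HEv (HBigOr [seq HNeg (HIff (HAtom a 1) (HAtom a 2)) | a <- enum O]))))).

Definition GNI (H O : {set AP G}) : hform :=
  HForall 1 (HForall 2 (HExists 3
     (HAnd (HGlob (eq_on H 1 3)) (HGlob (eq_on O 2 3))))).

End Semantics.

From Pilot Require Import Defs.
From mathcomp Require Import all_boot.
From Stdlib Require Import Classical ClassicalEpsilon FunctionalExtensionality.
Set Implicit Arguments. Unset Strict Implicit. Unset Printing Implicit Defensive.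

(* Take paths t1, t2 for pi_1, pi_2 of GNI. Instantiate pi_1 of NDS by t2 and
   let xi_H replay the moves it makes along t1. NDS then yields an outcome t
   that never differs from t2 on O; since the H-labels are determined by the
   moves of xi_H, t also agrees with t1 on H, so t is the witness for pi_3. *)

Section HyperATLFacts.
Variable G : MSCGS.
Implicit Types (P : assignment G) (f g : hform G) (t u v : Defs.path G).
Implicit Types (X : {set AP G}) (tau : nat -> agent G -> move G).

Lemma lookup_shift k pi P :
  lookup pi (shift k P) = omap (fun t j => t (k + j)) (lookup pi P).
Proof. by elim: P => //= x P ->; case: ifP. Qed.

Lemma sat_HAtom_shift P k a pi t :
  lookup pi P = Some t -> sat (shift k P) (HAtom a pi) <-> a \in lab (t k).
Proof. by move=> hpi; rewrite /= lookup_shift hpi /= addn0. Qed.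

Lemma sat_HImp P f g : sat P (HImp f g) <-> (sat P f -> sat P g).
Proof.
split=> [h hf | h [nnf ng]]; last by apply: nnf => hf; exact: ng (h hf).
by apply: NNPP => hg; apply: h; split=> // nf; exact: nf hf.
Qed.

Lemma sat_HIff P f g : sat P (HIff f g) <-> (sat P f <-> sat P g).
Proof.
by split=> [[/sat_HImp h1 /sat_HImp h2] | [h1 h2]] //; split; apply/sat_HImp.
Qed.

Lemma sat_HGlob P f : sat P (HGlob f) <-> forall k, sat (shift k P) f.
Proof.
split=> [h k | h [k [nf _]]]; last exact: nf (h k).
by apply: NNPP => nf; apply: h; exists k.
Qed.

Lemma sat_HBigAnd_map P (T : eqType) (h : T -> hform G) (s : seq T) :
  sat P (HBigAnd (map h s)) <-> forall a, a \in s -> sat P (h a).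
Proof.
elim: s => [//|x s IH] /=; split=> [[hx /IH hs] a | hs].
- by rewrite in_cons => /predU1P [-> //|]; exact: hs.
- split; first by apply: hs; rewrite mem_head.
  by apply/IH => a sa; apply: hs; rewrite in_cons sa orbT.
Qed.

Lemma sat_HBigOr_map P (T : eqType) (h : T -> hform G) (s : seq T) :
  sat P (HBigOr (map h s)) <-> exists2 a, a \in s & sat P (h a).
Proof.
elim: s => [|x s IH] /=; first by split=> [nt | [a]] //; case: nt.
split=> [hor | [a]].
  have [hx | nhx] := classic (sat P (h x)); first by exists x; rewrite ?mem_head.
  have [a sa ha] : exists2 a, a \in s & sat P (h a).
    by apply/IH; apply: NNPP => ns; apply: hor.
  by exists a; rewrite // in_cons sa orbT.
rewrite in_cons => /predU1P [-> hx | sa ha] [nhx ns]; first exact: nhx.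
by apply: ns; apply/IH; exists a.
Qed.

Lemma not_sat_HEv_HBigOr_neg P (T : eqType) (h : T -> hform G) (s : seq T) :
  ~ sat P (HEv (HBigOr [seq HNeg (h a) | a <- s])) <->
  sat P (HGlob (HBigAnd (map h s))).
Proof.
rewrite sat_HGlob; split=> [nev k | hall [k [/sat_HBigOr_map [a sa nha] _]]].
  apply/sat_HBigAnd_map => a sa; apply: NNPP => nha; apply: nev.
  by exists k; split=> //; apply/sat_HBigOr_map; exists a.
by apply: nha; move/sat_HBigAnd_map: (hall k); apply.
Qed.

Definition agree_on X u v := forall k, lab (u k) :&: X = lab (v k) :&: X.

Lemma sat_eq_on_shift P X p q tp tq k :
  lookup p P = Some tp -> lookup q P = Some tq ->
  sat (shift k P) (eq_on X p q) <-> lab (tp k) :&: X = lab (tq k) :&: X.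
Proof.
move=> hp hq; rewrite /eq_on sat_HBigAnd_map; split=> [hX | eX a].
  apply/setP => a; rewrite !inE; case aX: (a \in X); rewrite ?andbF ?andbT //.
  move/(_ a): hX; rewrite mem_enum aX => /(_ isT) /sat_HIff [h1 h2].
  by apply/idP/idP => [/(sat_HAtom_shift _ _ hp) /h1 /(sat_HAtom_shift _ _ hq)
                     | /(sat_HAtom_shift _ _ hq) /h2 /(sat_HAtom_shift _ _ hp)].
rewrite mem_enum => aX; move/setP/(_ a): eX; rewrite !inE aX !andbT => e.
by apply/sat_HIff; rewrite !(sat_HAtom_shift _ _ hp, sat_HAtom_shift _ _ hq) e.
Qed.

Lemma sat_HGlob_eq_on P X p q tp tq :
  lookup p P = Some tp -> lookup q P = Some tq ->
  sat P (HGlob (eq_on X p q)) <-> agree_on X tp tq.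
Proof.
by move=> hp hq; rewrite sat_HGlob; split=> h k; apply/(sat_eq_on_shift _ _ hp hq).
Qed.

Definition run tau u := forall i, delta (u i) (tau i) = u i.+1.

Definition open_loop tau : strategies G := fun xi p _ => tau (size p).-1 xi.

Lemma size_prefix u i : size (Defs.prefix u i) = i.+1.
Proof. by rewrite size_map size_iota. Qed.

Lemma run_unique tau u v : run tau u -> run tau v -> u 0 = v 0 -> u = v.
Proof.
move=> ru rv e0; apply: functional_extensionality; elim=> // i IH.
by rewrite -ru -rv IH.
Qed.

Lemma out_run s A F u :
  out s A F u ->
  exists2 tau, run tau u &
    forall i xi, xi \in A -> tau i xi = F xi (Defs.prefix u i) (tau i).
Proof.
case=> _ /choice [tau htau]; exists tau => [i | i xi xiA]; first exact: proj1 (htau i).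
exact: proj2 (htau i) xi xiA.
Qed.

Lemma out_open_loop s A tau u :
  out s A (open_loop tau) u ->
  exists2 tau', run tau' u & forall i xi, xi \in A -> tau' i xi = tau i xi.
Proof.
move=> /out_run [tau' ru play]; exists tau' => // i xi xiA.
by rewrite play // /open_loop size_prefix.
Qed.

Lemma out_setT_open_loop s tau u : out s setT (open_loop tau) u -> run tau u.
Proof.
move=> /out_open_loop [tau' ru play] i.
have -> : tau i = tau' i by apply: functional_extensionality => xi; rewrite play ?inE.
exact: ru.
Qed.

Lemma sat_HForallI P pi f :
  (forall t tau, t 0 = cur_state P -> run tau t -> sat ((pi, t) :: P) f) ->
  sat P (HForall pi f).
Proof.
move=> h; exists (fun xi _ sigma => sigma xi); split=> [xi | t ot]; first by rewrite inE.
by have [tau rt _] := out_run ot; apply: h rt; case: ot.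
Qed.

Lemma sat_HExistsI P pi f t tau :
  t 0 = cur_state P -> run tau t -> sat ((pi, t) :: P) f -> sat P (HExists pi f).
Proof.
move=> t0 rt ht; exists (open_loop tau); split=> // u ou.
suff -> : u = t by [].
by apply: run_unique (out_setT_open_loop ou) rt _; case: ou => ->.
Qed.

Lemma not_sat_HQuant P A pi f F :
  ~ sat P (HQuant A pi f) -> stage_respecting A F ->
  exists2 t, out (cur_state P) A F t & ~ sat ((pi, t) :: P) f.
Proof.
move=> nq sF; apply: NNPP => nex; apply: nq; exists F; split=> // t ot.
by apply: NNPP => nt; apply: nex; exists t.
Qed.

Lemma agree_on_runs xi X tau tau' u v :
  (forall s s' (sg sg' : agent G -> move G), sg xi = sg' xi ->
     lab (delta s sg) :&: X = lab (delta s' sg') :&: X) ->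
  run tau u -> run tau' v -> lab (u 0) :&: X = lab (v 0) :&: X ->
  (forall i, tau i xi = tau' i xi) -> agree_on X u v.
Proof. by move=> detX ru rv e0 same [|k] //; rewrite -ru -rv; apply: detX. Qed.

End HyperATLFacts.

Theorem lemma4p3 (G : MSCGS) (xiN xiH xiL : agent G) (H L O : {set AP G}) :
  is_system xiN xiH xiL H L O ->
  models (NDS xiH L O) -> models (GNI H O).
Proof.
move=> [_ _ _ detH _] nds.
apply: sat_HForallI => t1 tau1 t1_0 run1.
apply: sat_HForallI => t2 tau2 t2_0 run2.
have [t out_t not_imp] : exists2 t, out (t2 0) [set xiH] (open_loop tau1) t &
    ~ sat [:: (2, t); (1, t2)] (HImp (HGlob (eq_on L 1 2))
         (HEv (HBigOr [seq HNeg (HIff (HAtom a 1) (HAtom a 2)) | a <- enum O]))).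
  apply: (@not_sat_HQuant _ [:: (1, t2)] _ _ _ (open_loop tau1)) => // sat_q.
  by apply: nds; apply: sat_HExistsI run2 sat_q; rewrite t2_0.
have O_t2_t : agree_on O t2 t.
  apply/(@sat_HGlob_eq_on _ [:: (2, t); (1, t2)] O 1 2) => //.
  rewrite /eq_on; apply/not_sat_HEv_HBigOr_neg => ev.
  by apply: not_imp; apply/sat_HImp.
have [tau run_t xiH_moves] := out_open_loop out_t.
have H_t1_t : agree_on H t1 t.
  apply: agree_on_runs detH run1 run_t _ _ => [|i]; last by rewrite xiH_moves ?set11.
  by case: out_t => ->; rewrite t2_0.
apply: sat_HExistsI run_t _; first by case: out_t.
by split; apply/sat_HGlob_eq_on.
Qed.
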